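(* Let $a_\beta$ denote the unique maximizer of $T_0$ on $(0,\infty)$ (for $\beta>\beta_c$) and $q_\beta=a_\beta^{-2}$. Then $q_\beta=1+O(\beta^{-2})$ as $\beta\to\infty$.
   Context: $\Gamma_\beta=\frac{e^{-\beta}+e^{-3\beta/2}}{1-e^{-\beta/2}}$, $\beta_c$ the unique positive solution of $\Gamma_\beta=1$. $c_\beta=\frac{1+e^{-\beta/2}}{1-e^{-\beta/2}}$, $\mathcal L(h)=\log\sum_{k\in\mathbb Z}e^{hk}e^{-\beta|k|/2}/c_\beta$ for $|h|<\beta/2$. $\mathcal G(h)=\int_0^1\mathcal L(h(x-\frac12))dx$ for $h\in(-\beta,\beta)$, $\tilde h(q)$ the unique $h\in[0,\beta)$ with $\mathcal G'(h)=q$. $T_0(a)=a\log\Gamma_\beta+a\big(\mathcal G(\tilde h(a^{-2}))-a^{-2}\tilde h(a^{-2})\big)$ for $a>0$. *)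

From Stdlib Require Import Reals Lra ClassicalEpsilon.
From Coquelicot Require Import Coquelicot.
Open Scope R_scope.

Definition Gamma (b : R) : R :=
  (exp (- b) + exp (- (3 * b / 2))) / (1 - exp (- (b / 2))).

Definition beta_c : R :=
  epsilon (inhabits 0) (fun b => 0 < b /\ Gamma b = 1).

Definition c_beta (b : R) : R :=
  (1 + exp (- (b / 2))) / (1 - exp (- (b / 2))).

(* sum_{k in Z} e^{h k} e^{-beta |k| / 2}, split as k >= 0 and k = -(n+1) *)
Definition Zsum (b h : R) : R :=
  Series (fun n : nat => exp (h * INR n) * exp (- (b * Rabs (INR n) / 2)))
  + Series (fun n : nat => exp (h * (- INR (S n))) * exp (- (b * Rabs (- INR (S n)) / 2))).

(* L(h) = log( sum_k e^{hk} e^{-beta|k|/2} / c_beta ), meaningful for |h| < beta/2 *)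
Definition Lfun (b h : R) : R := ln (Zsum b h / c_beta b).

(* G(h) = int_0^1 L(h (x - 1/2)) dx, meaningful for h in (-beta, beta) *)
Definition Gfun (b h : R) : R := RInt (fun x => Lfun b (h * (x - 1 / 2))) 0 1.

Definition htilde (b q : R) : R :=
  epsilon (inhabits 0) (fun h => 0 <= h < b /\ Derive (Gfun b) h = q).

Definition T0 (b a : R) : R :=
  a * ln (Gamma b)
  + a * (Gfun b (htilde b (/ a ^ 2)) - / a ^ 2 * htilde b (/ a ^ 2)).

(* Write [q = a^-2] and [h_q = htilde b q].  Since [G] is convex, [G(h_q) - q h_q] is the
   minimum of [G(h) - q h], so [T0 b a] is bounded above by [a (ln Gamma + G(h) - h / a^2)] for
   every [h].  Comparing the maximiser [a] with [a = 1] at [h = h_1] gives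
   [b (a - 1)^2 <= (a - 1) (a e - d)] with [e = ln Gamma + b + G(h_1)] and [d = b - h_1].
   Both are [O(1/b)]: [ln Gamma = -b + O(1/b)], [0 <= G(h) <= 68 / h], and the tangent of
   slope 1 at [h_1] pins [h_1] within [O(1/b)] of [b].  Hence [|a - 1| = O(b^-2)].  Everything is
   explicit because [L(t) = 2 ln(1 - e^(-b/2)) - ln(1 - e^(t - b/2)) - ln(1 - e^(-t - b/2))]. *)

From Stdlib Require Import Reals Lra ClassicalEpsilon Ranalysis5.
From Coquelicot Require Import Coquelicot.
Open Scope R_scope.

Lemma exp_lt_1 x : x < 0 -> exp x < 1.
Proof. intros; rewrite <- exp_0; apply exp_increasing; lra. Qed.

Lemma exp_le_exp x y : x <= y -> exp x <= exp y.
Proof. intros [H|H]; [left; apply exp_increasing; lra|subst; lra]. Qed.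

Lemma ln_le_sub_1 z : 0 < z -> ln z <= z - 1.
Proof. intros Hz. pose proof (exp_ineq1_le (ln z)). rewrite exp_ln in H; lra. Qed.

Lemma exp_mul_INR x n : exp (x * INR n) = exp x ^ n.
Proof.
  induction n as [|n IH].
  - simpl. now rewrite Rmult_0_r, exp_0.
  - rewrite <- tech_pow_Rmult, <- IH, <- exp_plus, S_INR. f_equal. ring.
Qed.

Lemma ex_derive_continuous_R (f : R -> R) x : ex_derive f x -> continuous f x.
Proof. apply (ex_derive_continuous (K := R_AbsRing) (V := R_NormedModule)). Qed.

(* Ratios of the two geometric series (over k >= 0 and k <= -1) whose sum is [Zsum b t]. *)
Definition geo_up b t := exp (t - b / 2).
Definition geo_dn b t := exp (- t - b / 2).
Definition rho b := exp (- (b / 2)).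

Lemma geo_lt_1 b t : Rabs t < b / 2 -> geo_up b t < 1 /\ geo_dn b t < 1.
Proof. intros H; apply Rabs_lt_between in H; split; apply exp_lt_1; lra. Qed.

Lemma geo_up_mul_dn b t : geo_up b t * geo_dn b t = rho b * rho b.
Proof. unfold geo_up, geo_dn, rho. rewrite <- !exp_plus. f_equal. field. Qed.

Lemma Zsum_closed b h : Rabs h < b / 2 ->
  Zsum b h = / (1 - geo_up b h) + geo_dn b h / (1 - geo_dn b h).
Proof.
  intros Hh. destruct (geo_lt_1 b h Hh) as [Hu Hd].
  assert (0 < geo_up b h) by apply exp_pos. assert (0 < geo_dn b h) by apply exp_pos.
  unfold Zsum. f_equal; apply is_series_unique.
  - apply is_series_ext with (fun n => geo_up b h ^ n).
    + intros n. unfold geo_up. rewrite <- exp_mul_INR, <- exp_plus,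
        Rabs_right by (apply Rle_ge, pos_INR). f_equal. field.
    + apply is_series_geom. rewrite Rabs_right; lra.
  - replace (geo_dn b h / (1 - geo_dn b h)) with (scal (geo_dn b h) (/ (1 - geo_dn b h)))
      by (unfold scal; simpl; unfold mult; simpl; field; lra).
    apply is_series_ext with (fun n => scal (geo_dn b h) (geo_dn b h ^ n)).
    + intros n. change (scal (geo_dn b h) (geo_dn b h ^ n)) with (geo_dn b h * geo_dn b h ^ n).
      unfold geo_dn. rewrite <- exp_mul_INR, <- !exp_plus, Rabs_Ropp,
        Rabs_right by (apply Rle_ge, pos_INR).
      f_equal. rewrite S_INR. field.
    + apply (@is_series_scal_l R_AbsRing R_NormedModule), is_series_geom.
      rewrite Rabs_right; lra.
Qed.

Definition Lc b t := 2 * ln (1 - rho b) - ln (1 - geo_up b t) - ln (1 - geo_dn b t).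

Lemma Lfun_closed b t : 0 < b -> Rabs t < b / 2 -> Lfun b t = Lc b t.
Proof.
  intros Hb Ht. destruct (geo_lt_1 b t Ht) as [Hu Hd].
  assert (Hr : rho b < 1) by (apply exp_lt_1; lra).
  assert (0 < geo_up b t) by apply exp_pos. assert (0 < geo_dn b t) by apply exp_pos.
  assert (0 < rho b) by apply exp_pos. pose proof (geo_up_mul_dn b t).
  unfold Lfun, c_beta. rewrite Zsum_closed by exact Ht. fold (rho b).
  replace ((/ (1 - geo_up b t) + geo_dn b t / (1 - geo_dn b t)) / ((1 + rho b) / (1 - rho b)))
    with ((1 - rho b) * (1 - rho b) * / ((1 - geo_up b t) * (1 - geo_dn b t)))
    by (field_simplify_eq; try lra; nra).
  unfold Lc. rewrite ln_mult, ln_Rinv, !ln_mult;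
    try apply Rinv_0_lt_compat; try apply Rmult_lt_0_compat; lra.
Qed.

Definition moment (k : nat) (g : R -> R) (h : R) : R :=
  RInt (fun x => (x - 1/2) ^ k * g (h * (x - 1/2))) 0 1.

Lemma Rabs_mul_centered_le h x : 0 <= x <= 1 -> Rabs (h * (x - 1/2)) <= Rabs h / 2.
Proof.
  intros Hx. rewrite Rabs_mult. pose proof (Rabs_pos h).
  assert (Rabs (x - 1/2) <= 1/2) by (apply Rabs_le_between; lra). nra.
Qed.

Lemma continuous_moment_integrand (g : R -> R) k h x :
  continuous g (h * (x - 1/2)) ->
  continuous (fun s => (s - 1/2) ^ k * g (h * (s - 1/2))) x.
Proof.
  intros Hg. apply (continuous_mult (K := R_AbsRing)).
  - apply ex_derive_continuous_R. auto_derive; auto.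
  - apply (continuous_comp (fun s => h * (s - 1/2)) g); [|exact Hg].
    apply ex_derive_continuous_R. auto_derive; auto.
Qed.

Lemma ex_RInt_moment (g : R -> R) r k h a c :
  (forall t, Rabs t < r -> continuous g t) -> Rabs h < 2 * r ->
  0 <= a <= c -> c <= 1 ->
  ex_RInt (fun x => (x - 1/2) ^ k * g (h * (x - 1/2))) a c.
Proof.
  intros Hg Hh Hac Hc. apply (ex_RInt_continuous (V := R_CompleteNormedModule)).
  intros z Hz. rewrite Rmin_left, Rmax_right in Hz by lra.
  apply continuous_moment_integrand, Hg.
  pose proof (Rabs_mul_centered_le h z ltac:(lra)). lra.
Qed.

Lemma ex_margin_Rabs_mul_lt r h : 0 < r -> Rabs h < 2 * r ->
  exists d : posreal, forall u v, Rabs (u - h) < d -> Rabs (v - 1/2) <= 1/2 + d ->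
    Rabs (u * (v - 1/2)) < r.
Proof.
  intros Hr Hh.
  assert (Hd0 : 0 < Rmin 1 ((2 * r - Rabs h) / (4 * r + 4))).
  { apply Rmin_glb_lt; [lra|]. apply Rdiv_lt_0_compat; lra. }
  exists (mkposreal _ Hd0). intros u v Hu Hv; simpl in Hu, Hv.
  set (d := Rmin 1 ((2 * r - Rabs h) / (4 * r + 4))) in *.
  assert (d <= 1) by apply Rmin_l.
  assert (Hd : d * (4 * r + 4) <= 2 * r - Rabs h).
  { assert (d <= (2 * r - Rabs h) / (4 * r + 4)) by apply Rmin_r.
    apply Rmult_le_reg_r with (/ (4 * r + 4)); [apply Rinv_0_lt_compat; lra|].
    rewrite Rmult_assoc, Rinv_r by lra. lra. }
  pose proof (Rabs_triang_inv u h). pose proof (Rabs_pos u).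
  pose proof (Rabs_pos (v - 1/2)). pose proof (Rabs_pos h).
  rewrite Rabs_mult.
  apply Rle_lt_trans with ((Rabs h + d) * (1/2 + d)); [apply Rmult_le_compat|]; nra.
Qed.

Lemma continuity_2d_moment_integrand (f : R -> R) k h t :
  continuity_pt f (h * (t - 1/2)) ->
  continuity_2d_pt (fun u v => (v - 1/2) ^ k * f (u * (v - 1/2))) h t.
Proof.
  intros Hf. apply continuity_2d_pt_mult.
  - apply (continuity_1d_2d_pt_comp (fun s => (s - 1/2) ^ k) (fun _ v => v)).
    + apply continuity_pt_filterlim, ex_derive_continuous_R. auto_derive; auto.
    + apply continuity_2d_pt_id2.
  - apply (continuity_1d_2d_pt_comp f (fun u v => u * (v - 1/2))); [exact Hf|].
    apply continuity_2d_pt_mult; [apply continuity_2d_pt_id1|].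
    apply continuity_2d_pt_minus; [apply continuity_2d_pt_id2|apply continuity_2d_pt_const].
Qed.

Section MomentDerivative.

Variables (r : R) (g g' : R -> R).
Hypothesis r_pos : 0 < r.
Hypothesis g_derive : forall t, Rabs t < r -> is_derive g t (g' t).
Hypothesis g'_continuous : forall t, Rabs t < r -> continuous g' t.

Lemma is_derive_moment k h : Rabs h < 2 * r ->
  is_derive (moment k g) h (moment (S k) g' h).
Proof.
  intros Hh. destruct (ex_margin_Rabs_mul_lt r h r_pos Hh) as [d Hd].
  assert (Hin : forall t, 0 <= t <= 1 -> Rabs (t - 1/2) <= 1/2 + d).
  { intros t Ht. apply Rabs_le_between. pose proof (cond_pos d). lra. }
  assert (Hh0 : Rabs (h - h) < d) by (rewrite Rminus_diag, Rabs_R0; apply cond_pos).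
  assert (HD : forall u t, Rabs (u - h) < d -> Rabs (t - 1/2) <= 1/2 + d ->
     is_derive (fun z => (t - 1/2) ^ k * g (z * (t - 1/2))) u
       ((t - 1/2) ^ S k * g' (u * (t - 1/2)))).
  { intros u t Hu Ht.
    replace ((t - 1/2) ^ S k * g' (u * (t - 1/2)))
      with ((t - 1/2) ^ k * ((t - 1/2) * g' (u * (t - 1/2)))) by (simpl; ring).
    apply is_derive_scal.
    apply (is_derive_comp g (fun z => z * (t - 1/2))); [apply g_derive; auto|].
    auto_derive; auto; ring. }
  replace (moment (S k) g' h) with
    (RInt (fun t => Derive (fun u => (t - 1/2) ^ k * g (u * (t - 1/2))) h) 0 1).
  2:{ apply RInt_ext. intros x Hx. rewrite Rmin_left, Rmax_right in Hx by lra.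
      apply is_derive_unique, HD; auto. apply Hin; lra. }
  apply (is_derive_RInt_param (fun u t => (t - 1/2) ^ k * g (u * (t - 1/2)))).
  - exists d. intros y Hy t Ht. rewrite Rmin_left, Rmax_right in Ht by lra.
    eexists. apply HD; auto.
  - intros t Ht. rewrite Rmin_left, Rmax_right in Ht by lra.
    apply continuity_2d_pt_ext_loc with (fun u v => (v - 1/2) ^ S k * g' (u * (v - 1/2))).
    + exists d. intros u v Hu Hv. symmetry. apply is_derive_unique, HD; auto.
      apply Rabs_le_between. apply Rabs_lt_between in Hv. lra.
    + apply continuity_2d_moment_integrand, continuity_pt_filterlim, g'_continuous, Hd;
        [exact Hh0|apply Hin; lra].
  - exists d. intros y Hy. apply (ex_RInt_continuous (V := R_CompleteNormedModule)).
    intros z Hz. rewrite Rmin_left, Rmax_right in Hz by lra.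
    apply continuous_moment_integrand.
    apply ex_derive_continuous_R. eexists. apply g_derive, Hd; [exact Hy|]. apply Hin; lra.
Qed.

End MomentDerivative.

Definition dLc b t := geo_up b t / (1 - geo_up b t) - geo_dn b t / (1 - geo_dn b t).
Definition d2Lc b t := geo_up b t / (1 - geo_up b t) ^ 2 + geo_dn b t / (1 - geo_dn b t) ^ 2.

Lemma is_derive_Lc b t : Rabs t < b / 2 -> is_derive (Lc b) t (dLc b t).
Proof.
  intros H. destruct (geo_lt_1 b t H). unfold Lc, dLc, geo_up, geo_dn in *.
  auto_derive; unfold Rminus in *; [repeat split; lra|field; lra].
Qed.

Lemma is_derive_dLc b t : Rabs t < b / 2 -> is_derive (dLc b) t (d2Lc b t).
Proof.
  intros H. destruct (geo_lt_1 b t H). unfold dLc, d2Lc, geo_up, geo_dn in *.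
  auto_derive; unfold Rminus in *; [repeat split; lra|field; lra].
Qed.

Lemma continuous_Lc b t : Rabs t < b / 2 -> continuous (Lc b) t.
Proof. intros H. apply ex_derive_continuous_R. eexists. now apply is_derive_Lc. Qed.

Lemma continuous_dLc b t : Rabs t < b / 2 -> continuous (dLc b) t.
Proof. intros H. apply ex_derive_continuous_R. eexists. now apply is_derive_dLc. Qed.

Lemma continuous_d2Lc b t : Rabs t < b / 2 -> continuous (d2Lc b) t.
Proof.
  intros H. destruct (geo_lt_1 b t H). apply ex_derive_continuous_R.
  unfold d2Lc, geo_up, geo_dn in *. auto_derive. unfold Rminus in *.
  repeat split; apply Rgt_not_eq, Rlt_gt; repeat apply Rmult_lt_0_compat; lra.
Qed.

Lemma d2Lc_nonneg b t : Rabs t < b / 2 -> 0 <= d2Lc b t.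
Proof.
  intros H. destruct (geo_lt_1 b t H).
  assert (0 < geo_up b t) by apply exp_pos. assert (0 < geo_dn b t) by apply exp_pos.
  unfold d2Lc. apply Rplus_le_le_0_compat; apply Rdiv_le_0_compat; try lra;
    apply pow_lt; lra.
Qed.

Definition Gc b := moment 0 (Lc b).
Definition dGc b := moment 1 (dLc b).
Definition d2Gc b := moment 2 (d2Lc b).

Lemma is_derive_Gc b h : 0 < b -> Rabs h < b -> is_derive (Gc b) h (dGc b h).
Proof.
  intros Hb Hh.
  exact (is_derive_moment (b / 2) (Lc b) (dLc b) ltac:(lra) (is_derive_Lc b)
    (continuous_dLc b) 0 h ltac:(lra)).
Qed.

Lemma is_derive_dGc b h : 0 < b -> Rabs h < b -> is_derive (dGc b) h (d2Gc b h).
Proof.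
  intros Hb Hh.
  exact (is_derive_moment (b / 2) (dLc b) (d2Lc b) ltac:(lra) (is_derive_dLc b)
    (continuous_d2Lc b) 1 h ltac:(lra)).
Qed.

Lemma d2Gc_nonneg b h : 0 < b -> Rabs h < b -> 0 <= d2Gc b h.
Proof.
  intros Hb Hh. apply RInt_ge_0; [lra| |].
  - apply (ex_RInt_moment _ (b / 2)); try lra. apply continuous_d2Lc.
  - intros x Hx. apply Rmult_le_pos; [apply pow2_ge_0|].
    apply d2Lc_nonneg. pose proof (Rabs_mul_centered_le h x ltac:(lra)). lra.
Qed.

Lemma Gfun_Gc b h : 0 < b -> Rabs h < b -> Gfun b h = Gc b h.
Proof.
  intros Hb Hh. apply RInt_ext. intros x Hx. rewrite Rmin_left, Rmax_right in Hx by lra.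
  rewrite pow_O, Rmult_1_l. apply Lfun_closed; auto.
  pose proof (Rabs_mul_centered_le h x ltac:(lra)). lra.
Qed.

Lemma Derive_Gfun b h : 0 < b -> Rabs h < b -> Derive (Gfun b) h = dGc b h.
Proof.
  intros Hb Hh. apply is_derive_unique, is_derive_ext_loc with (Gc b).
  - assert (Hp : 0 < b - Rabs h) by lra. exists (mkposreal _ Hp).
    intros y Hy. change (Rabs (y - h) < b - Rabs h) in Hy.
    symmetry. apply Gfun_Gc; auto. pose proof (Rabs_triang_inv y h). lra.
  - apply is_derive_Gc; auto.
Qed.

Lemma Rabs_lt_between_min_max c x y z :
  Rabs x < c -> Rabs y < c -> Rmin x y <= z <= Rmax x y -> Rabs z < c.
Proof.
  intros Hx Hy. apply Rabs_lt_between in Hx, Hy. intros Hz.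
  apply Rabs_lt_between. unfold Rmin, Rmax in Hz. destruct Rle_dec; lra.
Qed.

Section Convexity.

Variables (c : R) (f f' : R -> R).
Hypothesis f_derive : forall x, Rabs x < c -> is_derive f x (f' x).

Lemma MVT_ball x y : Rabs x < c -> Rabs y < c ->
  exists z, Rabs z < c /\ Rmin x y <= z <= Rmax x y /\ f y - f x = f' z * (y - x).
Proof.
  intros Hx Hy. destruct (MVT_gen f x y f') as [z [Hz Hf]].
  - intros z Hz. apply f_derive, (Rabs_lt_between_min_max c x y); lra.
  - intros z Hz. apply continuity_pt_filterlim, ex_derive_continuous_R.
    eexists. apply f_derive, (Rabs_lt_between_min_max c x y); lra.
  - exists z. repeat split; try lra. now apply (Rabs_lt_between_min_max c x y).
Qed.

Lemma nondecreasing_of_derive_nonneg :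
  (forall x, Rabs x < c -> 0 <= f' x) ->
  forall x y, Rabs x < c -> Rabs y < c -> x <= y -> f x <= f y.
Proof.
  intros Hf' x y Hx Hy Hxy. destruct (MVT_ball x y Hx Hy) as [z [Hz [_ Hf]]].
  pose proof (Hf' z Hz). nra.
Qed.

Lemma tangent_le_of_derive_nondecreasing :
  (forall x y, Rabs x < c -> Rabs y < c -> x <= y -> f' x <= f' y) ->
  forall x0 x, Rabs x0 < c -> Rabs x < c -> f x0 + f' x0 * (x - x0) <= f x.
Proof.
  intros Hf' x0 x Hx0 Hx. destruct (MVT_ball x0 x Hx0 Hx) as [z [Hz [Hzb Hf]]].
  unfold Rmin, Rmax in Hzb. destruct Rle_dec.
  - pose proof (Hf' x0 z Hx0 Hz ltac:(lra)). nra.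
  - pose proof (Hf' z x0 Hz Hx0 ltac:(lra)). nra.
Qed.

End Convexity.

Lemma Gc_tangent b h0 h : 0 < b -> Rabs h0 < b -> Rabs h < b ->
  Gc b h0 + dGc b h0 * (h - h0) <= Gc b h.
Proof.
  intros Hb. apply (tangent_le_of_derive_nondecreasing b).
  - intros; now apply is_derive_Gc.
  - apply (nondecreasing_of_derive_nonneg b _ (d2Gc b)).
    + intros; now apply is_derive_dGc.
    + intros; now apply d2Gc_nonneg.
Qed.

Lemma dLc_opp b t : dLc b (- t) = - dLc b t.
Proof.
  unfold dLc, geo_up, geo_dn. replace (- - t - b / 2) with (t - b / 2) by ring. ring.
Qed.

Lemma frac_le u v : 0 < v -> v <= u -> u < 1 -> v / (1 - v) <= u / (1 - u).
Proof.
  intros Hv Hvu Hu. apply Rminus_le.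
  replace (v / (1 - v) - u / (1 - u)) with ((v - u) / ((1 - v) * (1 - u))) by (field; lra).
  unfold Rdiv. assert (0 < / ((1 - v) * (1 - u))) by (apply Rinv_0_lt_compat; nra). nra.
Qed.

Lemma dLc_nonneg b t : 0 <= t -> Rabs t < b / 2 -> 0 <= dLc b t.
Proof.
  intros Ht Htb. destruct (geo_lt_1 b t Htb).
  pose proof (frac_le (geo_up b t) (geo_dn b t) (exp_pos _)
    (exp_le_exp (- t - b / 2) (t - b / 2) ltac:(lra)) ltac:(assumption)).
  unfold dLc. lra.
Qed.

Lemma moment1_integrand_nonneg b h x : 0 <= h -> Rabs (h * x) < b / 2 ->
  0 <= x * dLc b (h * x).
Proof.
  intros Hh Hhx. destruct (Rle_dec 0 x).
  - apply Rmult_le_pos; auto. apply dLc_nonneg; auto. nra.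
  - replace (x * dLc b (h * x)) with (- x * dLc b (h * - x))
      by (replace (h * - x) with (- (h * x)) by ring; rewrite dLc_opp; ring).
    apply Rmult_le_pos; [lra|]. apply dLc_nonneg; [nra|].
    now rewrite Ropp_mult_distr_r_reverse, Rabs_Ropp.
Qed.

Lemma inv_sub_1_le_exp_ratio w : 0 < w -> / w - 1 <= exp (- w) / (1 - exp (- w)).
Proof.
  intros Hw. pose proof (exp_ineq1_le (- w)). pose proof (exp_lt_1 (- w) ltac:(lra)).
  replace (exp (- w) / (1 - exp (- w))) with (/ (1 - exp (- w)) - 1) by (field; lra).
  assert (/ w <= / (1 - exp (- w))) by (apply Rinv_le_contravar; lra). lra.
Qed.

Lemma rho_le_half b : 2 <= b -> rho b <= 1/2.
Proof.
  intros Hb. unfold rho. rewrite exp_Ropp. pose proof (exp_ineq1_le (b / 2)).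
  replace (1/2) with (/ 2) by field. apply Rinv_le_contravar; lra.
Qed.

Lemma dLc_lower b t : 2 <= b -> 0 <= t < b / 2 -> / (b / 2 - t) - 2 <= dLc b t.
Proof.
  intros Hb Ht.
  pose proof (inv_sub_1_le_exp_ratio (b / 2 - t) ltac:(lra)) as Hup.
  replace (- (b / 2 - t)) with (t - b / 2) in Hup by ring. fold (geo_up b t) in Hup.
  assert (Hdn : geo_dn b t <= 1/2).
  { apply Rle_trans with (rho b); [apply exp_le_exp; lra|now apply rho_le_half]. }
  assert (0 < geo_dn b t) by apply exp_pos.
  assert (geo_dn b t / (1 - geo_dn b t) <= 1).
  { apply Rmult_le_reg_r with (1 - geo_dn b t); [lra|].
    unfold Rdiv. rewrite Rmult_assoc, Rinv_l; lra. }
  unfold dLc. lra.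
Qed.

Lemma moment1_integrand_lower b h x : 2 <= b -> 0 <= h < b -> 3/4 <= x < 1 ->
  / (4 * ((b - h) / 2 + b * (1 - x))) - 1/2 <= (x - 1/2) ^ 1 * dLc b (h * (x - 1/2)).
Proof.
  intros Hb Hh Hx. rewrite pow_1.
  assert (Ht : Rabs (h * (x - 1/2)) < b / 2).
  { assert (0 <= h * (x - 1/2) <= h / 2) by nra. rewrite Rabs_right; lra. }
  pose proof (dLc_nonneg b (h * (x - 1/2)) ltac:(nra) Ht).
  pose proof (dLc_lower b (h * (x - 1/2)) Hb ltac:(apply Rabs_lt_between in Ht; nra)).
  set (D := (b - h) / 2 + b * (1 - x)).
  assert (/ D <= / (b / 2 - h * (x - 1/2))) by (apply Rinv_le_contravar; unfold D; nra).
  assert (0 <= / D) by (left; apply Rinv_0_lt_compat; unfold D; nra).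
  rewrite Rinv_mult. nra.
Qed.

Lemma is_RInt_moment1_lower b e : 0 < b -> 0 < e ->
  is_RInt (fun x => / (4 * (e + b * (1 - x))) - 1/2) (3/4) 1
    ((ln (e + b / 4) - ln e) / (4 * b) - 1/8).
Proof.
  intros Hb He.
  set (F x := - ln (e + b * (1 - x)) / (4 * b) - x / 2).
  replace ((ln (e + b / 4) - ln e) / (4 * b) - 1/8) with (minus (F 1) (F (3/4))).
  2:{ unfold minus, plus, opp, F; simpl.
      replace (e + b * (1 - 1)) with e by ring.
      replace (e + b * (1 - 3/4)) with (e + b / 4) by field. field. lra. }
  apply (is_RInt_derive (V := R_CompleteNormedModule) F).
  - intros x Hx. rewrite Rmin_left, Rmax_right in Hx by lra.
    unfold F. auto_derive; [nra|field; split; nra].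
  - intros x Hx. rewrite Rmin_left, Rmax_right in Hx by lra.
    apply ex_derive_continuous_R. auto_derive. nra.
Qed.

Lemma dGc_lower b h : 2 <= b -> 0 <= h < b ->
  (ln ((b - h) / 2 + b / 4) - ln ((b - h) / 2)) / (4 * b) - 1/8 <= dGc b h.
Proof.
  intros Hb Hh.
  assert (Hh' : Rabs h < 2 * (b / 2)) by (rewrite Rabs_right; lra).
  assert (Hint : forall a c, 0 <= a <= c -> c <= 1 ->
    ex_RInt (fun x => (x - 1/2) ^ 1 * dLc b (h * (x - 1/2))) a c)
    by (intros; apply (ex_RInt_moment _ (b / 2)); auto; apply continuous_dLc).
  unfold dGc, moment. rewrite <- (RInt_Chasles _ 0 (3/4) 1) by (apply Hint; lra).
  change (plus ?x ?y) with (x + y).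
  assert (0 <= RInt (fun x => (x - 1/2) ^ 1 * dLc b (h * (x - 1/2))) 0 (3/4)).
  { apply RInt_ge_0; [lra|apply Hint; lra|].
    intros x Hx. rewrite pow_1. apply moment1_integrand_nonneg; [lra|].
    pose proof (Rabs_mul_centered_le h x ltac:(lra)). rewrite (Rabs_right h) in * by lra. lra. }
  assert (RInt (fun x => / (4 * ((b - h) / 2 + b * (1 - x))) - 1/2) (3/4) 1
          <= RInt (fun x => (x - 1/2) ^ 1 * dLc b (h * (x - 1/2))) (3/4) 1).
  { apply RInt_le; [lra|eexists; apply is_RInt_moment1_lower; lra|apply Hint; lra|].
    intros x Hx. apply moment1_integrand_lower; lra. }
  rewrite (is_RInt_unique _ _ _ _ (is_RInt_moment1_lower b ((b - h) / 2) ltac:(lra) ltac:(lra))) in *.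
  lra.
Qed.

Lemma dGc_0 b : dGc b 0 = 0.
Proof.
  unfold dGc, moment. rewrite (RInt_ext _ (fun _ => 0)).
  - rewrite RInt_const. unfold scal; simpl; unfold mult; simpl. ring.
  - intros x _. rewrite Rmult_0_l. unfold dLc, geo_up, geo_dn.
    replace (- 0 - b / 2) with (0 - b / 2) by ring. now rewrite Rminus_diag, Rmult_0_r.
Qed.

(* The lower bound forces [dGc b h > q] once [b - h = 2 exp (- 4 b (q + 1))]. *)
Lemma ex_dGc_eq b q : 4 <= b -> 0 < q -> exists h, 0 <= h < b /\ dGc b h = q.
Proof.
  intros Hb Hq.
  set (e := exp (- (4 * b * (q + 1)))).
  assert (He : 0 < e <= 1).
  { split; [apply exp_pos|]. rewrite <- exp_0. apply exp_le_exp. nra. }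
  set (h1 := b - 2 * e).
  pose proof (dGc_lower b h1 ltac:(lra) ltac:(unfold h1; lra)) as HL.
  replace ((b - h1) / 2) with e in HL by (unfold h1; field).
  rewrite (ln_exp (- (4 * b * (q + 1))) : ln e = _) in HL.
  replace ((ln (e + b / 4) - - (4 * b * (q + 1))) / (4 * b))
    with (ln (e + b / 4) / (4 * b) + (q + 1)) in HL by (field; lra).
  assert (0 <= ln (e + b / 4) / (4 * b)).
  { apply Rdiv_le_0_compat; [rewrite <- ln_1; apply ln_le|]; lra. }
  destruct (IVT_interv (fun h => dGc b h - q) 0 h1) as [z [Hz1 Hz2]].
  - intros a Ha. apply (continuity_pt_minus (dGc b) (fun _ => q)).
    + apply continuity_pt_filterlim, ex_derive_continuous_R. eexists.
      apply is_derive_dGc; [lra|rewrite Rabs_right; unfold h1 in *; lra].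
    + apply continuity_pt_const. intros u v; reflexivity.
  - unfold h1; lra.
  - rewrite dGc_0. lra.
  - lra.
  - exists z. split; [unfold h1 in *; lra|lra].
Qed.

Lemma htilde_spec b q : 4 <= b -> 0 < q ->
  0 <= htilde b q < b /\ dGc b (htilde b q) = q.
Proof.
  intros Hb Hq. unfold htilde.
  destruct (epsilon_spec (inhabits 0) (fun h => 0 <= h < b /\ Derive (Gfun b) h = q))
    as [Hh HD].
  - destruct (ex_dGc_eq b q Hb Hq) as [h [Hh Hd]]. exists h.
    split; auto. rewrite Derive_Gfun; auto; [lra|rewrite Rabs_right; lra].
  - split; auto. rewrite <- Derive_Gfun; auto; [lra|rewrite Rabs_right; lra].
Qed.

Definition sqrt_frac w := 2 * sqrt w / sqrt (1 + w).
Definition dsqrt_frac w := / (sqrt w * sqrt (1 + w) * (1 + w)).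

Lemma is_derive_sqrt_frac w : 0 < w -> is_derive sqrt_frac w (dsqrt_frac w).
Proof.
  intros Hw. unfold sqrt_frac, dsqrt_frac.
  assert (0 < sqrt w) by (apply sqrt_lt_R0; lra).
  assert (0 < sqrt (1 + w)) by (apply sqrt_lt_R0; lra).
  pose proof (sqrt_sqrt w ltac:(lra)). pose proof (sqrt_sqrt (1 + w) ltac:(lra)).
  auto_derive; [repeat split; lra|].
  set (s := sqrt w) in *. set (t := sqrt (1 + w)) in *.
  replace (1 + w) with (t * t) by assumption. field_simplify_eq; [nra|split; lra].
Qed.

Lemma sqrt_frac_bounds w : 0 < w -> 0 <= sqrt_frac w <= 2.
Proof.
  intros Hw. unfold sqrt_frac.
  assert (0 < sqrt w) by (apply sqrt_lt_R0; lra).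
  assert (0 < sqrt (1 + w)) by (apply sqrt_lt_R0; lra).
  assert (sqrt w <= sqrt (1 + w)) by (apply sqrt_le_1; lra).
  split; [apply Rdiv_le_0_compat; lra|].
  apply Rmult_le_reg_r with (sqrt (1 + w)); [lra|].
  unfold Rdiv. rewrite Rmult_assoc, Rinv_l; lra.
Qed.

Lemma neg_ln_one_sub_exp_le_small w : 0 < w <= 1 ->
  - ln (1 - exp (- w)) <= 17 * dsqrt_frac w.
Proof.
  intros Hw. unfold dsqrt_frac.
  pose proof (exp_lt_1 (- w) ltac:(lra)).
  assert (exp (- w) * (1 + w) <= 1).
  { rewrite exp_Ropp. pose proof (exp_ineq1_le w). pose proof (exp_pos w).
    apply Rmult_le_reg_l with (exp w); [lra|]. rewrite <- Rmult_assoc, Rinv_r; lra. }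
  assert (0 < sqrt w) by (apply sqrt_lt_R0; lra).
  assert (0 < sqrt (1 + w)) by (apply sqrt_lt_R0; lra).
  pose proof (sqrt_sqrt w ltac:(lra)) as Hs. pose proof (sqrt_sqrt (1 + w) ltac:(lra)) as Ht.
  set (s := sqrt w) in *. set (t := sqrt (1 + w)) in *. set (y := exp (- w)) in *.
  assert (Hts : 0 < t / s) by (apply Rdiv_lt_0_compat; lra).
  assert (/ (1 - y) <= (t / s) * (t / s)).
  { replace ((t / s) * (t / s)) with ((1 + w) / w) 
      by (rewrite <- Ht, <- Hs; field; lra).
    replace ((1 + w) / w) with (/ (1 - y) + (1 - y * (1 + w)) / (w * (1 - y)))
      by (field; lra).
    assert (0 <= (1 - y * (1 + w)) / (w * (1 - y))) by (apply Rdiv_le_0_compat; nra).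
    lra. }
  rewrite <- ln_Rinv by lra.
  apply Rle_trans with (ln ((t / s) * (t / s))); [apply ln_le; auto; apply Rinv_0_lt_compat; lra|].
  rewrite ln_mult by assumption. pose proof (ln_le_sub_1 (t / s) Hts).
  assert (2 * (t / s) <= 17 * / (s * t * (1 + w))).
  { replace (1 + w) with (t * t) by assumption.
    apply Rmult_le_reg_r with (s * t * (t * t)); [repeat apply Rmult_lt_0_compat; lra|].
    field_simplify; nra. }
  lra.
Qed.

Lemma neg_ln_one_sub_exp_le_large w : 1 <= w ->
  - ln (1 - exp (- w)) <= 17 * dsqrt_frac w.
Proof.
  intros Hw. unfold dsqrt_frac.
  assert (0 < sqrt w) by (apply sqrt_lt_R0; lra).
  assert (0 < sqrt (1 + w)) by (apply sqrt_lt_R0; lra).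
  pose proof (sqrt_sqrt w ltac:(lra)) as Hs. pose proof (sqrt_sqrt (1 + w) ltac:(lra)) as Ht.
  pose proof (exp_lt_1 (- w) ltac:(lra)). pose proof (exp_pos (- w)).
  assert (HE : exp (- w) * exp w = 1) by (rewrite <- exp_plus, Rplus_opp_l; apply exp_0).
  assert (1 + w + w * w / 4 <= exp w).
  { replace w with (w / 2 + w / 2) at 4 by field. rewrite exp_plus.
    pose proof (exp_ineq1_le (w / 2)). nra. }
  set (s := sqrt w) in *. set (t := sqrt (1 + w)) in *.
  set (y := exp (- w)) in *. set (E := exp w) in *.
  rewrite <- ln_Rinv by lra.
  pose proof (ln_le_sub_1 (/ (1 - y)) ltac:(apply Rinv_0_lt_compat; lra)).
  replace (/ (1 - y) - 1) with (/ (E - 1)) in * by (field_simplify_eq; nra).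
  assert (s * t <= 3/2 * w).
  { assert ((s * t) * (s * t) <= (3/2 * w) * (3/2 * w))
      by (replace ((s * t) * (s * t)) with ((s * s) * (t * t)) by ring; rewrite Hs, Ht; nra).
    nra. }
  assert (s * t * (1 + w) <= 17 * (E - 1)).
  { assert (s * t * (1 + w) <= 3/2 * w * (1 + w)) by (apply Rmult_le_compat_r; lra). nra. }
  replace (17 * / (s * t * (1 + w))) with (/ (s * t * (1 + w) / 17))
    by (field; split; lra).
  assert (/ (E - 1) <= / (s * t * (1 + w) / 17)).
  { apply Rinv_le_contravar; [|lra]. apply Rdiv_lt_0_compat; [|lra].
    repeat apply Rmult_lt_0_compat; lra. }
  lra.
Qed.

(* Integrable majorant of [-ln (1 - e^(-w))]: its primitive [17 sqrt_frac] stays below 34. *)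
Lemma neg_ln_one_sub_exp_le w : 0 < w -> - ln (1 - exp (- w)) <= 17 * dsqrt_frac w.
Proof.
  intros Hw. destruct (Rle_dec w 1).
  - apply neg_ln_one_sub_exp_le_small; lra.
  - apply neg_ln_one_sub_exp_le_large; lra.
Qed.

Lemma is_RInt_majorant h e : 0 < h -> 0 < e ->
  is_RInt (fun x => 17 * (dsqrt_frac (e + h * (1 - x)) + dsqrt_frac (e + h * x))) 0 1
    (34 / h * (sqrt_frac (e + h) - sqrt_frac e)).
Proof.
  intros Hh He.
  set (F x := 17 / h * (sqrt_frac (e + h * x) - sqrt_frac (e + h + - h * x))).
  replace (34 / h * (sqrt_frac (e + h) - sqrt_frac e)) with (minus (F 1) (F 0)).
  2:{ unfold minus, plus, opp, F; simpl.
      replace (e + h * 1) with (e + h) by ring. replace (e + h + - h * 1) with e by ring.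
      replace (e + h * 0) with e by ring. replace (e + h + - h * 0) with (e + h) by ring.
      field. lra. }
  assert (Hd : forall e' h' x, 0 < e' + h' * x ->
    is_derive (fun y => sqrt_frac (e' + h' * y)) x (h' * dsqrt_frac (e' + h' * x))).
  { intros e' h' x Hx. apply (is_derive_comp sqrt_frac (fun y => e' + h' * y)).
    - now apply is_derive_sqrt_frac.
    - auto_derive; auto; ring. }
  apply (is_RInt_derive (V := R_CompleteNormedModule) F).
  - intros x Hx. rewrite Rmin_left, Rmax_right in Hx by lra.
    replace (17 * (dsqrt_frac (e + h * (1 - x)) + dsqrt_frac (e + h * x))) with
      (17 / h * (h * dsqrt_frac (e + h * x) - (- h) * dsqrt_frac ((e + h) + (- h) * x)))
      by (replace ((e + h) + (- h) * x) with (e + h * (1 - x)) by ring; field; lra).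
    apply is_derive_scal, (is_derive_minus (fun y => sqrt_frac (e + h * y))
      (fun y => sqrt_frac (e + h + - h * y))); apply Hd; nra.
  - intros x Hx. rewrite Rmin_left, Rmax_right in Hx by lra.
    assert (0 < e + h * (1 - x)) by nra. assert (0 < e + h * x) by nra.
    assert (0 < sqrt (e + h * (1 - x))) by (apply sqrt_lt_R0; lra).
    assert (0 < sqrt (1 + (e + h * (1 - x)))) by (apply sqrt_lt_R0; lra).
    assert (0 < sqrt (e + h * x)) by (apply sqrt_lt_R0; lra).
    assert (0 < sqrt (1 + (e + h * x))) by (apply sqrt_lt_R0; lra).
    apply ex_derive_continuous_R. unfold dsqrt_frac. auto_derive. unfold Rminus in *.
    repeat split; try lra; apply Rgt_not_eq; repeat apply Rmult_lt_0_compat; lra.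
Qed.

Lemma Lc_upper b t : 0 < b -> Rabs t < b / 2 ->
  Lc b t <= - ln (1 - exp (- (b / 2 - t))) - ln (1 - exp (- (b / 2 + t))).
Proof.
  intros Hb Ht. assert (ln (1 - rho b) <= 0).
  { pose proof (exp_lt_1 (- (b / 2)) ltac:(lra)). pose proof (exp_pos (- (b / 2))).
    rewrite <- ln_1. apply ln_le; unfold rho; lra. }
  unfold Lc, geo_up, geo_dn.
  replace (- (b / 2 - t)) with (t - b / 2) by ring.
  replace (- (b / 2 + t)) with (- t - b / 2) by ring. lra.
Qed.

Lemma Gc_upper b h : 0 < b -> 0 < h < b -> Gc b h <= 68 / h.
Proof.
  intros Hb Hh.
  set (e := (b - h) / 2).
  pose proof (sqrt_frac_bounds (e + h) ltac:(unfold e; lra)).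
  pose proof (sqrt_frac_bounds e ltac:(unfold e; lra)).
  apply Rle_trans with (34 / h * (sqrt_frac (e + h) - sqrt_frac e)).
  2:{ apply Rle_trans with (34 / h * 2); [|right; field; lra].
      apply Rmult_le_compat_l; [apply Rdiv_le_0_compat|]; lra. }
  rewrite <- (is_RInt_unique _ _ _ _ (is_RInt_majorant h e ltac:(lra) ltac:(unfold e; lra))).
  unfold Gc, moment. apply RInt_le; [lra| | |].
  - apply (ex_RInt_moment _ (b / 2)); [apply continuous_Lc|rewrite Rabs_right|..]; lra.
  - eexists. apply is_RInt_majorant; unfold e; lra.
  - intros x Hx. rewrite pow_O, Rmult_1_l.
    assert (Ht : Rabs (h * (x - 1/2)) < b / 2).
    { pose proof (Rabs_mul_centered_le h x ltac:(lra)) as Hx'.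
      rewrite (Rabs_right h) in Hx' by lra. lra. }
    pose proof (Lc_upper b _ Hb Ht).
    pose proof (neg_ln_one_sub_exp_le (e + h * (1 - x)) ltac:(unfold e; nra)).
    pose proof (neg_ln_one_sub_exp_le (e + h * x) ltac:(unfold e; nra)).
    replace (b / 2 - h * (x - 1/2)) with (e + h * (1 - x)) in * by (unfold e; field).
    replace (b / 2 + h * (x - 1/2)) with (e + h * x) in * by (unfold e; field).
    lra.
Qed.

Lemma Lc_nonneg b t : 0 < b -> Rabs t < b / 2 -> 0 <= Lc b t.
Proof.
  intros Hb Ht. destruct (geo_lt_1 b t Ht).
  pose proof (geo_up_mul_dn b t). pose proof (exp_lt_1 (- (b / 2)) ltac:(lra)).
  assert (0 < geo_up b t) by apply exp_pos. assert (0 < geo_dn b t) by apply exp_pos.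
  assert (0 < rho b) by apply exp_pos. fold (rho b) in *.
  (* AM-GM: [geo_up + geo_dn >= 2 rho] since [geo_up * geo_dn = rho^2] *)
  assert (2 * rho b <= geo_up b t + geo_dn b t).
  { assert (0 <= (geo_up b t - geo_dn b t) ^ 2) by apply pow2_ge_0. nra. }
  assert (ln ((1 - geo_up b t) * (1 - geo_dn b t)) <= ln ((1 - rho b) * (1 - rho b)))
    by (apply ln_le; [apply Rmult_lt_0_compat|]; nra).
  unfold Lc. rewrite !ln_mult in * by lra. lra.
Qed.

Lemma Gc_nonneg b h : 0 < b -> Rabs h < b -> 0 <= Gc b h.
Proof.
  intros Hb Hh. apply RInt_ge_0; [lra| |].
  - apply (ex_RInt_moment _ (b / 2)); [apply continuous_Lc|..]; lra.
  - intros x Hx. rewrite pow_O, Rmult_1_l. apply Lc_nonneg; auto.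
    pose proof (Rabs_mul_centered_le h x ltac:(lra)). lra.
Qed.

Lemma ln_Gamma_bounds b : 4 <= b -> 0 <= ln (Gamma b) + b <= 8 / b.
Proof.
  intros Hb. pose proof (exp_pos (- (b / 2))). fold (rho b) in *.
  pose proof (rho_le_half b ltac:(lra)).
  assert (rho b <= 2 / b).
  { unfold rho. rewrite exp_Ropp. pose proof (exp_ineq1_le (b / 2)).
    replace (2 / b) with (/ (b / 2)) by (field; lra). apply Rinv_le_contravar; lra. }
  assert (HG : Gamma b = exp (- b) * ((1 + rho b) / (1 - rho b))).
  { unfold Gamma. fold (rho b).
    replace (exp (- b)) with (rho b * rho b) by (unfold rho; rewrite <- exp_plus; f_equal; field).
    replace (exp (- (3 * b / 2))) with (rho b * rho b * rho b)
      by (unfold rho; rewrite <- !exp_plus; f_equal; field).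
    field. lra. }
  assert (1 <= (1 + rho b) / (1 - rho b)).
  { apply Rmult_le_reg_r with (1 - rho b); [lra|].
    unfold Rdiv. rewrite Rmult_assoc, Rinv_l; lra. }
  rewrite HG, ln_mult, ln_exp by (try apply exp_pos; lra).
  replace (- b + ln ((1 + rho b) / (1 - rho b)) + b) with (ln ((1 + rho b) / (1 - rho b))) by ring.
  split; [rewrite <- ln_1; apply ln_le; lra|].
  apply Rle_trans with ((1 + rho b) / (1 - rho b) - 1); [apply ln_le_sub_1; lra|].
  replace ((1 + rho b) / (1 - rho b) - 1) with (2 * rho b / (1 - rho b)) by (field; lra).
  apply Rle_trans with (4 * rho b); [|lra].
  apply Rmult_le_reg_r with (1 - rho b); [lra|].
  unfold Rdiv. rewrite Rmult_assoc, Rinv_l; nra.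
Qed.

Lemma T0_1 b : T0 b 1 = ln (Gamma b) + Gfun b (htilde b 1) - htilde b 1.
Proof. unfold T0. replace (/ 1 ^ 2) with 1 by field. ring. Qed.

Lemma T0_le b a h : 4 <= b -> 0 < a -> Rabs h < b ->
  T0 b a <= a * ln (Gamma b) + a * (Gfun b h - h / a ^ 2).
Proof.
  intros Hb Ha Hh.
  assert (Hq : 0 < / a ^ 2) by (apply Rinv_0_lt_compat, pow_lt; lra).
  destruct (htilde_spec b (/ a ^ 2) Hb Hq) as [Hh0 Hd].
  assert (Hh0' : Rabs (htilde b (/ a ^ 2)) < b) by (rewrite Rabs_right; lra).
  pose proof (Gc_tangent b _ h ltac:(lra) Hh0' Hh) as Ht. rewrite Hd in Ht.
  unfold T0. rewrite !Gfun_Gc by lra.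
  apply Rplus_le_compat_l, Rmult_le_compat_l; [lra|].
  unfold Rdiv. rewrite (Rmult_comm h). lra.
Qed.

Lemma htilde_1_bound b : 4 <= b ->
  0 <= Gfun b (htilde b 1) /\ Gfun b (htilde b 1) + (b - htilde b 1) <= 137 / b.
Proof.
  intros Hb. destruct (htilde_spec b 1 Hb Rlt_0_1) as [Hh1 Hd].
  set (h1 := htilde b 1) in *.
  assert (Hh1' : Rabs h1 < b) by (rewrite Rabs_right; lra).
  assert (Hinv : 0 < / b <= 1/4)
    by (split; [apply Rinv_0_lt_compat|replace (1/4) with (/ 4) by field;
        apply Rinv_le_contravar]; lra).
  set (hs := b - / b).
  assert (Gc b hs <= 136 / b).
  { apply Rle_trans with (68 / hs); [apply Gc_upper; unfold hs; lra|].
    replace (136 / b) with (68 / (b / 2)) by (field; lra).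
    apply Rmult_le_compat_l; [lra|]. apply Rinv_le_contravar; unfold hs; lra. }
  pose proof (Gc_tangent b h1 hs ltac:(lra) Hh1'
    ltac:(unfold hs; rewrite Rabs_right; lra)) as Ht.
  rewrite Hd in Ht.
  rewrite Gfun_Gc by lra.
  split; [apply Gc_nonneg; lra|].
  assert (hs = b - / b) by reflexivity.
  replace (137 / b) with (136 / b + / b) by (field; lra). lra.
Qed.

Lemma maximizer_sq_le b L g h a : 0 < a ->
  L + g - h <= a * L + a * (g - h / a ^ 2) ->
  b * (a - 1) ^ 2 <= (a - 1) * (a * (L + b + g) - (b - h)).
Proof.
  intros Ha Hmax.
  assert (a * (L + g - h) <= a * a * L + a * a * g - h).
  { replace (a * a * L + a * a * g - h) with (a * (a * L + a * (g - h / a ^ 2)))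
      by (field; lra).
    apply Rmult_le_compat_l; lra. }
  assert ((a - 1) * (a * (L + b + g) - (b - h)) - b * (a - 1) ^ 2
          = (a * a * L + a * a * g - h) - a * (L + g - h)) by ring.
  lra.
Qed.

Lemma inv_sq_sub_1_le b a e d E D : 0 < b -> 0 < a -> 2 * D <= b ^ 2 ->
  0 <= e <= E / b -> 0 <= d <= D / b ->
  b * (a - 1) ^ 2 <= (a - 1) * (a * e - d) ->
  Rabs (/ a ^ 2 - 1) <= (2 * E + 8 * D) / b ^ 2.
Proof.
  intros Hb Ha HDb He Hd Hsq.
  assert (HE : 0 <= E) by (apply Rmult_le_reg_r with (/ b); [apply Rinv_0_lt_compat|]; lra).
  assert (HD : 0 <= D) by (apply Rmult_le_reg_r with (/ b); [apply Rinv_0_lt_compat|]; lra).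
  assert (Hb2 : 0 < b ^ 2) by (apply pow_lt; lra).
  assert (Ha2 : 0 < a ^ 2) by (apply pow_lt; lra).
  replace (/ a ^ 2 - 1) with ((1 - a) * (1 + a) / a ^ 2) by (field; lra).
  destruct (Rle_dec 1 a) as [Ha1|Ha1].
  - assert (Hae : b * b * (a - 1) <= a * E).
    { destruct (Req_dec a 1) as [->|Hne]; [nra|].
      assert (b * (a - 1) <= a * e - d) by (apply Rmult_le_reg_l with (a - 1); nra).
      assert (b * e <= E) by (apply Rmult_le_reg_r with (/ b);
        [apply Rinv_0_lt_compat|rewrite Rmult_comm, <- Rmult_assoc, Rinv_l]; lra).
      nra. }
    rewrite Rabs_left1 by (apply Rmult_le_0_r; [nra|apply Rlt_le, Rinv_0_lt_compat; lra]).
    apply Rmult_le_reg_r with (b ^ 2 * a ^ 2); [apply Rmult_lt_0_compat; lra|].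
    replace (- ((1 - a) * (1 + a) / a ^ 2) * (b ^ 2 * a ^ 2))
      with (b * b * (a - 1) * (1 + a)) by (field; lra).
    replace ((2 * E + 8 * D) / b ^ 2 * (b ^ 2 * a ^ 2)) with ((2 * E + 8 * D) * a ^ 2)
      by (field; lra).
    assert (b * b * (a - 1) * (1 + a) <= a * E * (1 + a)) by (apply Rmult_le_compat_r; lra).
    assert (0 <= a * E * (a - 1)) by (apply Rmult_le_pos; [apply Rmult_le_pos|]; lra).
    assert (0 <= D * a ^ 2) by (apply Rmult_le_pos; lra).
    simpl in *. nra.
  - assert (Hda : b * b * (1 - a) <= D).
    { assert (0 <= (1 - a) * a * e) by (apply Rmult_le_pos; [apply Rmult_le_pos|]; lra).
      assert (b * (1 - a) <= d) by (apply Rmult_le_reg_l with (1 - a); nra).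
      assert (b * d <= D) by (apply Rmult_le_reg_r with (/ b);
        [apply Rinv_0_lt_compat|rewrite Rmult_comm, <- Rmult_assoc, Rinv_l]; lra).
      nra. }
    assert (Ha12 : 1/2 <= a) by nra.
    rewrite Rabs_right by (apply Rle_ge, Rdiv_le_0_compat; nra).
    apply Rmult_le_reg_r with (b ^ 2 * a ^ 2); [apply Rmult_lt_0_compat; lra|].
    replace ((1 - a) * (1 + a) / a ^ 2 * (b ^ 2 * a ^ 2))
      with (b * b * (1 - a) * (1 + a)) by (field; lra).
    replace ((2 * E + 8 * D) / b ^ 2 * (b ^ 2 * a ^ 2)) with ((2 * E + 8 * D) * a ^ 2)
      by (field; lra).
    assert (b * b * (1 - a) * (1 + a) <= D * 2) by (apply Rmult_le_compat; nra).
    assert (0 <= D * (a ^ 2 - 1/4)) by (apply Rmult_le_pos; nra).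
    assert (0 <= E * a ^ 2) by (apply Rmult_le_pos; lra).
    lra.
Qed.

Theorem proposition5p1 :
  exists C beta0 : R,
    forall beta : R, beta_c < beta -> beta0 <= beta ->
    forall a : R, 0 < a ->
      (forall a' : R, 0 < a' -> T0 beta a' <= T0 beta a) ->
      Rabs (/ a ^ 2 - 1) <= C / beta ^ 2.
Proof.
  exists (2 * 145 + 8 * 137), 17. intros b _ Hb a Ha Hmax.
  assert (Hb4 : 4 <= b) by lra.
  destruct (htilde_spec b 1 Hb4 Rlt_0_1) as [Hh1 _].
  destruct (htilde_1_bound b Hb4) as [HG0 HG1].
  pose proof (ln_Gamma_bounds b Hb4) as HL.
  apply (inv_sq_sub_1_le b a (ln (Gamma b) + b + Gfun b (htilde b 1)) (b - htilde b 1));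
    [lra|exact Ha|simpl; nra|lra|lra|].
  apply maximizer_sq_le; [exact Ha|]. rewrite <- T0_1.
  apply Rle_trans with (T0 b a); [apply Hmax; lra|].
  apply T0_le; [lra|exact Ha|rewrite Rabs_right; lra].
Qed.
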